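(* Suppose $\{\mathcal{G}_k\}$ is uniformly jointly strongly connected with constant $B\ge1$, and consider an algorithm in $\mathcal{A}_{\rm ave}$. (i) If $\alpha_k\ge\alpha_{k+1}$ for all $k$ and $\sum_{k=0}^\infty\alpha_k^{(n-1)B}=\infty$, then global asymptotic consensus is achieved. (ii) If $\alpha_k+\eta_k\le\alpha_{k+1}+\eta_{k+1}$ for all $k$ and $\sum_{k=0}^\infty(1-\alpha_k-\eta_k)^{(n-1)B}=\infty$, then global asymptotic consensus is achieved.
   Context: Network of nodes $\mathcal{V}=\{1,\dots,n\}$, $n\ge 3$, discrete time, states $x_i(k)\in\mathbb{R}$. At each time $k$ a digraph $\mathcal{G}_k=(\mathcal{V},\mathcal{E}_k)$ is given; $j$ is a neighbor of $i$ at time $k$ if $(j,i)\in\mathcal{E}_k$, every node is always its own neighbor; $\mathcal{N}_i(k)$ is the neighbor set. The algorithm is $$x_i(k+1)=\eta_k x_i(k)+\alpha_k\min_{j\in\mathcal{N}_i(k)}x_j(k)+(1-\eta_k-\alpha_k)\max_{j\in\mathcal{N}_i(k)}x_j(k),$$ with node-independent parameters; $\mathcal{A}_{\rm ave}$ consists of those with $\eta_k\in(0,1]$, $\alpha_k\in[0,1-\eta_k]$ for all $k$. Global asymptotic consensus: for every initial time $k_0\ge0$ and initial value $x(k_0)=x^0\in\mathbb{R}^n$ there is $z_*$ with $x_i(k)\to z_*$ for all $i$. A digraph is strongly connected if every node is reachable from every other node by a directed path. $\mathcal{G}([k_1,k_2])=(\mathcal{V},\cup_{k\in[k_1,k_2]}\mathcal{E}_k)$.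 $\{\mathcal{G}_k\}$ is uniformly jointly strongly connected if there is an integer $B\ge1$ with $\mathcal{G}([k,k+B-1])$ strongly connected for all $k\ge0$. *)

From Stdlib Require Import Reals Lra Lia List Relations.
Import ListNotations.
Open Scope R_scope.

(* Nodes are 0, ..., n-1.  A time-varying digraph is a boolean edge relation
   E k j i meaning (j,i) is an edge of G_k (j is a neighbor of i at time k).
   Every node is always its own neighbor: the neighbor set of i at time k is
   {i} ∪ { j < n | E k j i }. *)
Definition graph_seq := nat -> nat -> nat -> bool.

Definition neighbors (n : nat) (E : graph_seq) (k i : nat) : list nat :=
  filter (fun j => E k j i) (seq 0 n).

Definition nbr_min (n : nat) (E : graph_seq) (k i : nat) (x : nat -> R) : R :=
  fold_right Rmin (x i) (map x (neighbors n E k i)).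
Definition nbr_max (n : nat) (E : graph_seq) (k i : nat) (x : nat -> R) : R :=
  fold_right Rmax (x i) (map x (neighbors n E k i)).

Definition step (n : nat) (E : graph_seq) (eta alpha : nat -> R) (k : nat)
  (x : nat -> R) : nat -> R :=
  fun i => eta k * x i + alpha k * nbr_min n E k i x
           + (1 - eta k - alpha k) * nbr_max n E k i x.

(* traj ... k0 x0 m = x(k0 + m) for the trajectory with x(k0) = x0. *)
Fixpoint traj (n : nat) (E : graph_seq) (eta alpha : nat -> R) (k0 : nat)
  (x0 : nat -> R) (m : nat) : nat -> R :=
  match m with
  | O => x0
  | S m' => step n E eta alpha (k0 + m') (traj n E eta alpha k0 x0 m')
  end.

Definition global_consensus (n : nat) (E : graph_seq) (eta alpha : nat -> R) : Prop :=
  forall (k0 : nat) (x0 : nat -> R), exists zstar : R,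
    forall i, (i < n)%nat -> Un_cv (fun m => traj n E eta alpha k0 x0 m i) zstar.

Definition in_A_ave (eta alpha : nat -> R) : Prop :=
  forall k, 0 < eta k <= 1 /\ 0 <= alpha k <= 1 - eta k.

Definition union_edge (n : nat) (E : graph_seq) (k1 k2 : nat) (j i : nat) : Prop :=
  (j < n)%nat /\ (i < n)%nat /\ exists k, (k1 <= k <= k2)%nat /\ E k j i = true.

Definition strongly_connected_union (n : nat) (E : graph_seq) (k1 k2 : nat) : Prop :=
  forall i j, (i < n)%nat -> (j < n)%nat ->
    clos_refl_trans nat (union_edge n E k1 k2) i j.

Definition UJSC (n : nat) (E : graph_seq) (B : nat) : Prop :=
  (1 <= B)%nat /\ forall k, strongly_connected_union n E k (k + B - 1).

From Stdlib Require Import Reals Lra Lia List Relations Bool Classical FunctionalExtensionality.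
Open Scope R_scope.

(* Consensus of the min-max averaging algorithm under uniform joint strong
   connectivity (Corollary 2).  Let L = (n-1)B and let m(k), M(k) be the
   minimum and maximum of the states at time k.

   - Every update is a convex combination of x_i, the neighbourhood minimum and
     the neighbourhood maximum, so m never decreases and M never increases;
     moreover a node with neighbour j ends at least alpha_k (M - x_j) below M.
   - Start from a node j0 attaining m(k).  The set of nodes "reached" from j0
     grows every B steps (the union graph over B steps is strongly connected),
     so after L steps it is the whole network; along the way the gap below M
     is multiplied by at most alpha.  This is the window contraction
        M(k+L) - m(k+L) <= (1 - alpha_k ... alpha_(k+L-1)) (M(k) - m(k)).
   - For nonincreasing alpha the product is at least a term alpha_j^L of the
     divergent series, and a general decay lemma for nonincreasing sequences
     drives the spread to 0; since m is monotone and bounded, all states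
     converge to its limit.  This is part (i), valid for every n >= 1.
   - Negating the states swaps min and max, i.e. replaces alpha by
     1 - alpha - eta; part (ii) is part (i) for the negated trajectory. *)

Lemma fold_min_le_init d (x : nat -> R) l : fold_right Rmin d (map x l) <= d.
Proof. induction l; simpl; [lra|]. eapply Rle_trans; [apply Rmin_r | auto]. Qed.

Lemma fold_min_le_mem d (x : nat -> R) l j : In j l -> fold_right Rmin d (map x l) <= x j.
Proof.
  induction l; simpl; [tauto|]. intros [->|H]; [apply Rmin_l|].
  eapply Rle_trans; [apply Rmin_r | auto].
Qed.

Lemma fold_min_glb d (x : nat -> R) l c :
  c <= d -> (forall j, In j l -> c <= x j) -> c <= fold_right Rmin d (map x l).
Proof. intros Hd H; induction l; simpl; auto. apply Rmin_glb; auto with datatypes. Qed.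

Lemma fold_max_ge_init d (x : nat -> R) l : d <= fold_right Rmax d (map x l).
Proof. induction l; simpl; [lra|]. eapply Rle_trans; [apply IHl | apply Rmax_r]. Qed.

Lemma fold_max_ge_mem d (x : nat -> R) l j : In j l -> x j <= fold_right Rmax d (map x l).
Proof.
  induction l; simpl; [tauto|]. intros [->|H]; [apply Rmax_l|].
  eapply Rle_trans; [apply IHl; auto | apply Rmax_r].
Qed.

Lemma fold_max_lub d (x : nat -> R) l c :
  d <= c -> (forall j, In j l -> x j <= c) -> fold_right Rmax d (map x l) <= c.
Proof. intros Hd H; induction l; simpl; auto. apply Rmax_lub; auto with datatypes. Qed.

Lemma fold_min_attained d (x : nat -> R) l :
  fold_right Rmin d (map x l) = d \/ exists j, In j l /\ fold_right Rmin d (map x l) = x j.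
Proof.
  induction l as [|a l [H|[j [Hj H]]]]; simpl; auto; rewrite H;
    unfold Rmin; destruct (Rle_dec _ _); eauto.
Qed.

(* Negation exchanges the two folds; this is the symmetry behind part (ii). *)
Lemma fold_min_opp d (x : nat -> R) l :
  fold_right Rmin (- d) (map (fun j => - x j) l) = - fold_right Rmax d (map x l).
Proof. induction l; simpl; auto. rewrite IHl, Ropp_Rmax; auto. Qed.

Lemma fold_max_opp d (x : nat -> R) l :
  fold_right Rmax (- d) (map (fun j => - x j) l) = - fold_right Rmin d (map x l).
Proof. induction l; simpl; auto. rewrite IHl, Ropp_Rmin; auto. Qed.

Definition net_min (n : nat) (x : nat -> R) : R := fold_right Rmin (x 0%nat) (map x (seq 0 n)).
Definition net_max (n : nat) (x : nat -> R) : R := fold_right Rmax (x 0%nat) (map x (seq 0 n)).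

Lemma net_min_le n x i : (i < n)%nat -> net_min n x <= x i.
Proof. intro Hi; apply fold_min_le_mem, in_seq; lia. Qed.

Lemma net_max_ge n x i : (i < n)%nat -> x i <= net_max n x.
Proof. intro Hi; apply fold_max_ge_mem, in_seq; lia. Qed.

Lemma net_min_glb n x c : (0 < n)%nat -> (forall i, (i < n)%nat -> c <= x i) -> c <= net_min n x.
Proof. intros Hn H; apply fold_min_glb; [auto | intros j Hj; apply in_seq in Hj; apply H; lia]. Qed.

Lemma net_max_lub n x c : (0 < n)%nat -> (forall i, (i < n)%nat -> x i <= c) -> net_max n x <= c.
Proof. intros Hn H; apply fold_max_lub; [auto | intros j Hj; apply in_seq in Hj; apply H; lia]. Qed.

Lemma net_min_attained n x : (0 < n)%nat -> exists j0, (j0 < n)%nat /\ x j0 = net_min n x.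
Proof.
  intro Hn; unfold net_min.
  destruct (fold_min_attained (x 0%nat) x (seq 0 n)) as [H|[j [Hj H]]]; rewrite H.
  - exists 0%nat; split; auto.
  - apply in_seq in Hj; exists j; split; [lia | auto].
Qed.

Lemma in_neighbors n E k i j : In j (neighbors n E k i) <-> (j < n)%nat /\ E k j i = true.
Proof. unfold neighbors. rewrite filter_In, in_seq. split; intros [H1 H2]; split; auto; lia. Qed.

Lemma traj_add n E eta alpha k0 x0 t m :
  traj n E eta alpha k0 x0 (t + m)
  = traj n E eta alpha (k0 + t) (traj n E eta alpha k0 x0 t) m.
Proof.
  induction m; simpl; [now rewrite Nat.add_0_r|].
  rewrite Nat.add_succ_r; simpl; rewrite IHm.
  now replace (k0 + (t + m))%nat with (k0 + t + m)%nat by lia.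
Qed.

Lemma antitone_of_step (u : nat -> R) :
  (forall k, u (S k) <= u k) -> forall p q, (p <= q)%nat -> u q <= u p.
Proof. intros H p q Hpq; induction Hpq; [lra|]. specialize (H m); lra. Qed.

Section Reachability.

Variables (n : nat) (E : graph_seq).

(* reached k1 j0 t i: node i can have been influenced by j0 during the time
   steps k1, ..., k1 + t - 1 (a time-respecting path from j0 to i). *)
Fixpoint reached (k1 j0 t : nat) : nat -> bool :=
  match t with
  | O => fun i => Nat.eqb i j0
  | S t' => fun i => reached k1 j0 t' i ||
      (Nat.ltb i n && existsb (fun j => reached k1 j0 t' j && E (k1 + t')%nat j i) (seq 0 n))
  end.

Lemma reached_lt k1 j0 t i : (j0 < n)%nat -> reached k1 j0 t i = true -> (i < n)%nat.
Proof.
  intro Hj; revert i; induction t; simpl; intros i H.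
  - apply Nat.eqb_eq in H; subst; auto.
  - apply orb_true_iff in H as [H|H]; auto.
    apply andb_true_iff in H as [H _]; apply Nat.ltb_lt; auto.
Qed.

Lemma reached_mono k1 j0 t t' i :
  (t <= t')%nat -> reached k1 j0 t i = true -> reached k1 j0 t' i = true.
Proof. intros Hle H; induction Hle; simpl; auto. rewrite IHHle; auto. Qed.

Lemma reached_start k1 j0 t : reached k1 j0 t j0 = true.
Proof. apply (reached_mono k1 j0 0); [lia|]. simpl; apply Nat.eqb_refl. Qed.

Lemma reached_edge k1 j0 t i j :
  reached k1 j0 t j = true -> (j < n)%nat -> (i < n)%nat ->
  E (k1 + t)%nat j i = true -> reached k1 j0 (S t) i = true.
Proof.
  intros H1 H2 H3 H4; simpl. apply orb_true_iff; right. apply andb_true_iff; split.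
  - apply Nat.ltb_lt; auto.
  - apply existsb_exists. exists j; split; [apply in_seq; lia | rewrite H1, H4; auto].
Qed.

Definition reached_count (k1 j0 t : nat) : nat := length (filter (reached k1 j0 t) (seq 0 n)).

Lemma filter_length_mono {A} (f g : A -> bool) l :
  (forall x, In x l -> f x = true -> g x = true) ->
  (length (filter f l) <= length (filter g l))%nat.
Proof.
  induction l; simpl; intros H; auto.
  assert (IH := IHl (fun x Hx => H x (or_intror Hx))).
  destruct (f a) eqn:Ef; [rewrite (H a (or_introl eq_refl) Ef); simpl; lia|].
  destruct (g a); simpl; lia.
Qed.

Lemma filter_length_strict {A} (f g : A -> bool) l v :
  (forall x, In x l -> f x = true -> g x = true) ->
  In v l -> f v = false -> g v = true -> (length (filter f l) < length (filter g l))%nat.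
Proof.
  induction l; simpl; intros H Hv Hf Hg; [tauto|].
  assert (Hsub : forall x, In x l -> f x = true -> g x = true) by auto.
  assert (M := filter_length_mono f g l Hsub).
  destruct Hv as [->|Hv]; [rewrite Hf, Hg; simpl; lia|].
  assert (IH := IHl Hsub Hv Hf Hg).
  destruct (f a) eqn:Ef; [rewrite (H a (or_introl eq_refl) Ef); simpl; lia|].
  destruct (g a); simpl; lia.
Qed.

Lemma forallb_false_exists {A} (f : A -> bool) l :
  forallb f l = false -> exists x, In x l /\ f x = false.
Proof.
  induction l as [|a l IH]; simpl; [discriminate|].
  destruct (f a) eqn:Ea; simpl; [intro H; destruct (IH H) as [x [Hx Hf]] |]; eauto.
Qed.

Lemma clos_refl_trans_exit (Rl : nat -> nat -> Prop) (P : nat -> bool) x y :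
  clos_refl_trans nat Rl x y -> P x = true -> P y = false ->
  exists u v, Rl u v /\ P u = true /\ P v = false.
Proof.
  induction 1; intros Hx Hy; [eauto | congruence |].
  destruct (P y) eqn:Ey; auto.
Qed.

Variable B : nat.
Hypothesis Hconn : UJSC n E B.

(* Strong connectivity of G([k1+t, k1+t+B-1]): while some node is unreached,
   B more steps reach a new node. *)
Lemma reached_count_grows k1 j0 t i :
  (j0 < n)%nat -> (i < n)%nat -> reached k1 j0 t i = false ->
  (reached_count k1 j0 t < reached_count k1 j0 (t + B))%nat.
Proof.
  intros Hj0 Hi Hr. destruct Hconn as [HB Hsc].
  destruct (clos_refl_trans_exit _ _ _ _ (Hsc (k1 + t)%nat j0 i Hj0 Hi) (reached_start k1 j0 t) Hr)
    as [u [v [[Hu [Hv [k [Hk HE]]]] [Hru Hrv]]]].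
  assert (Hreach_v : reached k1 j0 (S (k - k1)) v = true).
  { apply (reached_edge k1 j0 (k - k1) v u); auto.
    - apply (reached_mono _ _ t); [lia | exact Hru].
    - now replace (k1 + (k - k1))%nat with k by lia. }
  apply (filter_length_strict _ _ _ v); auto.
  - intros x _; apply reached_mono; lia.
  - apply in_seq; lia.
  - eapply reached_mono; [|exact Hreach_v]; lia.
Qed.

Lemma reached_count_lower k1 j0 m :
  (j0 < n)%nat -> (Nat.min n (S m) <= reached_count k1 j0 (m * B))%nat.
Proof.
  intro Hj0. unfold reached_count.
  induction m.
  - assert (In j0 (filter (reached k1 j0 0) (seq 0 n))).
    { apply filter_In; split; [apply in_seq; lia | apply reached_start]. }
    destruct (filter _ _); simpl in *; [tauto | lia].
  - destruct (forallb (reached k1 j0 (m * B)) (seq 0 n)) eqn:Hall.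
    + assert (Hfull : filter (reached k1 j0 (m * B)) (seq 0 n) = seq 0 n).
      { apply forallb_filter_id; auto. }
      pose proof (filter_length_le (reached k1 j0 (S m * B)) (seq 0 n)).
      assert (length (filter (reached k1 j0 (m * B)) (seq 0 n))
              <= length (filter (reached k1 j0 (S m * B)) (seq 0 n)))%nat.
      { apply filter_length_mono; intros x _; apply reached_mono; simpl; lia. }
      rewrite Hfull, length_seq in *; lia.
    + apply forallb_false_exists in Hall as [i [Hi Hr]]. apply in_seq in Hi.
      pose proof (reached_count_grows k1 j0 (m * B) i Hj0 ltac:(lia) Hr).
      unfold reached_count in *.
      replace (S m * B)%nat with (m * B + B)%nat by (simpl; lia). lia.
Qed.

Lemma all_reached k1 j0 i :
  (j0 < n)%nat -> (i < n)%nat -> reached k1 j0 ((n - 1) * B) i = true.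
Proof.
  intros Hj0 Hi.
  pose proof (reached_count_lower k1 j0 (n - 1) Hj0) as Hc.
  pose proof (filter_length_le (reached k1 j0 ((n - 1) * B)) (seq 0 n)).
  unfold reached_count in Hc; rewrite length_seq in *.
  assert (Hall : forallb (reached k1 j0 ((n - 1) * B)) (seq 0 n) = true).
  { apply filter_length_forallb; rewrite length_seq; lia. }
  rewrite forallb_forall in Hall. apply Hall, in_seq; lia.
Qed.

End Reachability.

Fixpoint alpha_prod (alpha : nat -> R) (k1 t : nat) : R :=
  match t with O => 1 | S t' => alpha_prod alpha k1 t' * alpha (k1 + t')%nat end.

Lemma alpha_prod_lb (alpha : nat -> R) k1 t k :
  (forall k, 0 <= alpha k) -> (forall k, alpha (S k) <= alpha k) ->
  (k1 + t <= k)%nat -> alpha k ^ t <= alpha_prod alpha k1 t.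
Proof.
  intros H0 Hm; induction t; simpl; intros Ht; [lra|].
  rewrite Rmult_comm. apply Rmult_le_compat; try apply pow_le; auto.
  - apply IHt; lia.
  - apply (antitone_of_step alpha Hm); lia.
Qed.

Section Dynamics.

Variables (n : nat) (E : graph_seq) (eta alpha : nat -> R).
Hypothesis Hparam : in_A_ave eta alpha.

Lemma step_le k x b i :
  (forall j, (j < n)%nat -> x j <= b) -> (i < n)%nat -> step n E eta alpha k x i <= b.
Proof.
  intros Hx Hi. destruct (Hparam k). unfold step.
  assert (nbr_min n E k i x <= b) by (eapply Rle_trans; [apply fold_min_le_init | auto]).
  assert (nbr_max n E k i x <= b).
  { apply fold_max_lub; auto. intros j Hj; apply in_neighbors in Hj; apply Hx; tauto. }
  specialize (Hx i Hi). nra.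
Qed.

Lemma step_ge k x a i :
  (forall j, (j < n)%nat -> a <= x j) -> (i < n)%nat -> a <= step n E eta alpha k x i.
Proof.
  intros Hx Hi. destruct (Hparam k). unfold step.
  assert (a <= nbr_max n E k i x) by (eapply Rle_trans; [|apply fold_max_ge_init]; auto).
  assert (a <= nbr_min n E k i x).
  { apply fold_min_glb; auto. intros j Hj; apply in_neighbors in Hj; apply Hx; tauto. }
  specialize (Hx i Hi). nra.
Qed.

Lemma step_gap k x b i j :
  (forall j, (j < n)%nat -> x j <= b) -> (i < n)%nat ->
  (j = i \/ ((j < n)%nat /\ E k j i = true)) ->
  alpha k * (b - x j) <= b - step n E eta alpha k x i.
Proof.
  intros Hx Hi Hj. destruct (Hparam k). unfold step.
  assert (nbr_min n E k i x <= x j).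
  { destruct Hj as [->|Hj]; [apply fold_min_le_init | apply fold_min_le_mem, in_neighbors; auto]. }
  assert (nbr_max n E k i x <= b).
  { apply fold_max_lub; auto. intros j' Hj'; apply in_neighbors in Hj'; apply Hx; tauto. }
  assert (nbr_min n E k i x <= x i) by apply fold_min_le_init.
  specialize (Hx i Hi). nra.
Qed.

Lemma traj_le k1 x b :
  (forall j, (j < n)%nat -> x j <= b) ->
  forall t j, (j < n)%nat -> traj n E eta alpha k1 x t j <= b.
Proof. intros Hx t; induction t; simpl; auto. intros; apply step_le; auto. Qed.

Lemma traj_ge k1 x a :
  (forall j, (j < n)%nat -> a <= x j) ->
  forall t j, (j < n)%nat -> a <= traj n E eta alpha k1 x t j.
Proof. intros Hx t; induction t; simpl; auto. intros; apply step_ge; auto. Qed.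

Lemma gap_propagation k1 x b j0 :
  (j0 < n)%nat -> (forall j, (j < n)%nat -> x j <= b) ->
  forall t i, reached n E k1 j0 t i = true ->
    alpha_prod alpha k1 t * (b - x j0) <= b - traj n E eta alpha k1 x t i.
Proof.
  intros Hj0 Hx t; induction t; intros i H.
  - simpl in *. apply Nat.eqb_eq in H; subst; lra.
  - assert (Hi : (i < n)%nat) by (eapply reached_lt; eauto).
    simpl in *.
    assert (Ha : 0 <= alpha (k1 + t)%nat) by apply Hparam.
    assert (Hle := traj_le k1 x b Hx t).
    apply orb_true_iff in H as [H|H].
    + pose proof (step_gap (k1 + t) _ b i i Hle Hi (or_introl eq_refl)).
      specialize (IHt i H). nra.
    + apply andb_true_iff in H as [_ H]. apply existsb_exists in H as [j [Hjs Hj]].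
      apply andb_true_iff in Hj as [Hj1 Hj2]. apply in_seq in Hjs.
      pose proof (step_gap (k1 + t) _ b i j Hle Hi (or_intror (conj (proj2 Hjs) Hj2))).
      specialize (IHt j Hj1). nra.
Qed.

Hypothesis Hn : (0 < n)%nat.

Lemma net_max_step k x : net_max n (step n E eta alpha k x) <= net_max n x.
Proof. apply net_max_lub; auto. intros; apply step_le; auto. intros; apply net_max_ge; auto. Qed.

Lemma net_min_step k x : net_min n x <= net_min n (step n E eta alpha k x).
Proof. apply net_min_glb; auto. intros; apply step_ge; auto. intros; apply net_min_le; auto. Qed.

Lemma net_min_le_max x : net_min n x <= net_max n x.
Proof. pose proof (net_min_le n x 0 Hn); pose proof (net_max_ge n x 0 Hn); lra. Qed.

Variable B : nat.
Hypothesis Hconn : UJSC n E B.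

(* Window contraction: over (n - 1) B steps the spread shrinks by the factor
   1 - alpha_prod, as seen from a node attaining the minimum. *)
Lemma window_contraction k1 x :
  let y := traj n E eta alpha k1 x ((n - 1) * B) in
  net_max n y - net_min n y
  <= (1 - alpha_prod alpha k1 ((n - 1) * B)) * (net_max n x - net_min n x).
Proof.
  intro y. destruct (net_min_attained n x Hn) as [j0 [Hj0 Hmin]].
  assert (Hub : forall j, (j < n)%nat -> x j <= net_max n x) by (intros; apply net_max_ge; auto).
  assert (Hmax : net_max n y
                 <= net_max n x - alpha_prod alpha k1 ((n - 1) * B) * (net_max n x - net_min n x)).
  { apply net_max_lub; auto. intros i Hi. rewrite <- Hmin.
    pose proof (gap_propagation k1 x _ j0 Hj0 Hub _ i (all_reached n E B Hconn k1 j0 i Hj0 Hi)).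
    unfold y; lra. }
  assert (net_min n x <= net_min n y).
  { apply net_min_glb; auto. intros i Hi; apply traj_ge; auto. intros; apply net_min_le; auto. }
  lra.
Qed.

End Dynamics.

Fixpoint window_sum (d : nat -> R) (T L : nat) : R :=
  match L with O => 0 | S l => window_sum d T l + d (T + l)%nat end.

Lemma window_sum_succ d T L : window_sum d (S T) L = window_sum d T L + d (T + L)%nat - d T.
Proof.
  induction L; simpl; [rewrite Nat.add_0_r; ring|].
  rewrite IHL. replace (S (T + L)) with (T + S L)%nat by lia. ring.
Qed.

Lemma window_sum_nonneg d T L : (forall t, 0 <= d t) -> 0 <= window_sum d T L.
Proof. intros H; induction L; simpl; [lra|]. specialize (H (T + L)%nat); lra. Qed.

(* While d stays above eps, each window sum drops by eps a_t. *)
Lemma decay_to_zero (d a : nat -> R) L :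
  (forall t, 0 <= d t) -> (forall t, d (S t) <= d t) -> (forall t, 0 <= a t) ->
  (forall t, d (t + L)%nat <= (1 - a t) * d t) ->
  cv_infty (sum_f_R0 a) -> Un_cv d 0.
Proof.
  intros Hd Hdec Ha Hwin Hdiv eps Heps.
  destruct (classic (exists T, d T < eps)) as [[T HT]|Hnone].
  - exists T; intros t Ht. pose proof (antitone_of_step d Hdec T t Ht).
    unfold R_dist; rewrite Rminus_0_r, Rabs_right; [lra | apply Rle_ge, Hd].
  - exfalso.
    assert (Hge : forall t, eps <= d t).
    { intro t; apply Rnot_lt_le; intro Hlt; apply Hnone; eauto. }
    assert (Hdrop : forall T, window_sum d (S T) L <= window_sum d 0 L - eps * sum_f_R0 a T).
    { induction T as [|T IH]; rewrite window_sum_succ; simpl.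
      - specialize (Hwin 0%nat); specialize (Hge 0%nat); specialize (Ha 0%nat); simpl in *; nra.
      - specialize (Hwin (S T)); specialize (Hge (S T)); specialize (Ha (S T)); simpl in *; nra. }
    destruct (Hdiv (window_sum d 0 L / eps)) as [N HN].
    specialize (HN N (le_n N)). specialize (Hdrop N).
    pose proof (window_sum_nonneg d (S N) L Hd).
    apply Rmult_lt_compat_l with (r := eps) in HN; auto.
    replace (eps * (window_sum d 0 L / eps)) with (window_sum d 0 L) in HN by (field; lra). lra.
Qed.

Lemma cv_infty_tail (g : nat -> R) K :
  cv_infty (sum_f_R0 g) -> cv_infty (sum_f_R0 (fun t => g (S K + t)%nat)).
Proof.
  intros Hdiv M. destruct (Hdiv (M + sum_f_R0 g K)) as [N HN].
  exists N. intros t Ht. specialize (HN (S K + t)%nat ltac:(lia)).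
  rewrite (tech2 g K (S K + t)) in HN by lia.
  replace (S K + t - S K)%nat with t in HN by lia. lra.
Qed.

Lemma squeeze_cv (lo d y : nat -> R) z :
  Un_cv lo z -> Un_cv d 0 -> (forall t, lo t <= y t <= lo t + d t) -> Un_cv y z.
Proof.
  intros Hlo Hd Hy eps Heps.
  destruct (Hlo (eps / 2)) as [N1 HN1]; [lra|].
  destruct (Hd (eps / 2)) as [N2 HN2]; [lra|].
  exists (max N1 N2). intros t Ht.
  specialize (HN1 t ltac:(lia)). specialize (HN2 t ltac:(lia)). specialize (Hy t).
  unfold R_dist in *. rewrite Rminus_0_r in HN2.
  apply Rabs_def2 in HN1. apply Rabs_def2 in HN2. apply Rabs_def1; lra.
Qed.

Theorem consensus_nonincreasing_alpha n E B eta alpha :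
  (0 < n)%nat -> UJSC n E B -> in_A_ave eta alpha ->
  (forall k, alpha k >= alpha (S k)) ->
  cv_infty (sum_f_R0 (fun k => alpha k ^ ((n - 1) * B))) ->
  global_consensus n E eta alpha.
Proof.
  intros Hn Hconn Hparam Hmono Hdiv k0 x0.
  set (L := ((n - 1) * B)%nat) in *.
  set (y := traj n E eta alpha k0 x0).
  set (lo := fun t => net_min n (y t)).
  set (hi := fun t => net_max n (y t)).
  set (d := fun t => hi t - lo t).
  assert (Hpos : forall k, 0 <= alpha k) by (intro k; apply Hparam).
  assert (Hanti : forall k, alpha (S k) <= alpha k) by (intro k; apply Rge_le, Hmono).
  assert (Hlo_grow : Un_growing lo) by (intro t; apply net_min_step; auto).
  assert (Hhi_dec : forall t, hi (S t) <= hi t) by (intro t; apply net_max_step; auto).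
  assert (Hd_nonneg : forall t, 0 <= d t).
  { intro t; pose proof (net_min_le_max n Hn (y t)); unfold d, hi, lo; lra. }
  assert (Hd_dec : forall t, d (S t) <= d t).
  { intro t; specialize (Hlo_grow t); specialize (Hhi_dec t); unfold d; lra. }
  (* a t is a term of the divergent series bounded by the window product at t. *)
  set (a := fun t => alpha (S (k0 + L) + t)%nat ^ L).
  assert (Hwin : forall t, d (t + L)%nat <= (1 - a t) * d t).
  { intro t. pose proof (window_contraction n E eta alpha Hparam Hn B Hconn (k0 + t) (y t)) as Hc.
    assert (a t <= alpha_prod alpha (k0 + t) L) by (apply alpha_prod_lb; auto; lia).
    unfold d, hi, lo, y in *; rewrite traj_add; fold L in Hc. specialize (Hd_nonneg t). nra. }
  assert (Hd0 : Un_cv d 0).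
  { apply (decay_to_zero d a L); auto.
    - intro t; apply pow_le; auto.
    - apply (cv_infty_tail (fun k => alpha k ^ L)); auto. }
  (* The minimum is nondecreasing and bounded by the initial maximum. *)
  destruct (growing_cv lo Hlo_grow) as [z Hz].
  { exists (hi 0%nat). intros r [t ->].
    pose proof (antitone_of_step hi Hhi_dec 0 t ltac:(lia)).
    specialize (Hd_nonneg t). unfold d in *. lra. }
  exists z. intros i Hi. apply (squeeze_cv lo d); auto.
  intro t. pose proof (net_min_le n (y t) i Hi). pose proof (net_max_ge n (y t) i Hi).
  unfold d, hi, lo, y in *; lra.
Qed.

Lemma traj_opp n E eta alpha k0 x0 m :
  traj n E eta (fun k => 1 - alpha k - eta k) k0 (fun i => - x0 i) m
  = fun i => - traj n E eta alpha k0 x0 m i.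
Proof.
  induction m; simpl; auto. rewrite IHm. apply functional_extensionality; intro i.
  unfold step, nbr_min, nbr_max. rewrite fold_min_opp, fold_max_opp. ring.
Qed.

Lemma consensus_of_complement n E eta alpha :
  global_consensus n E eta (fun k => 1 - alpha k - eta k) -> global_consensus n E eta alpha.
Proof.
  intros Hc k0 x0. destruct (Hc k0 (fun i => - x0 i)) as [z Hz].
  exists (- z). intros i Hi eps Heps.
  destruct (CV_opp _ _ (Hz i Hi) eps Heps) as [N HN]. exists N. intros m Hm.
  specialize (HN m Hm). unfold opp_seq in HN. rewrite traj_opp, Ropp_involutive in HN. auto.
Qed.

Theorem corollary2 (n : nat) (E : graph_seq) (B : nat) (eta alpha : nat -> R) :
  (3 <= n)%nat ->
  UJSC n E B ->
  in_A_ave eta alpha ->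
  ((forall k, alpha k >= alpha (S k)) ->
   cv_infty (fun N => sum_f_R0 (fun k => alpha k ^ ((n - 1) * B)) N) ->
   global_consensus n E eta alpha)
  /\
  ((forall k, alpha k + eta k <= alpha (S k) + eta (S k)) ->
   cv_infty (fun N => sum_f_R0 (fun k => (1 - alpha k - eta k) ^ ((n - 1) * B)) N) ->
   global_consensus n E eta alpha).
Proof.
  intros Hn Hconn Hparam. split.
  - intros Hmono Hdiv. apply (consensus_nonincreasing_alpha n E B); auto; lia.
  - intros Hmono Hdiv. apply consensus_of_complement.
    apply (consensus_nonincreasing_alpha n E B); auto; [lia | |].
    + intro k; specialize (Hparam k); lra.
    + intro k; specialize (Hmono k); lra.
Qed.
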